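(* Assume Condition 1. For all $t\ge1$, $\bar V_t(\pi^* )\le\theta K$ and $\bar V_t(\pi_t)\le\theta K$.
   Context: Contextual bandit setting: $A$ a set of $K$ actions, $X$ contexts, $\Pi$ a finite set of $N$ policies, $D$ a distribution over $(x,\vec r)\in X\times[0,1]^K$ with marginal $D_X$; $(x_t,\vec r_t)\sim D$ i.i.d., the learner observes $x_t$, picks $a_t$, sees only $r_t:=r_t(a_t)$. $\eta_D(\pi)=\mathbb{E}[r(\pi(x))]$, $\pi^*$ a maximizer. $W_P(x,a)=\sum_{\pi:\pi(x)=a}P(\pi)$. With history $((x_i,a_i,r_i,p_i))_{i\le t}$, $\eta_t(W)=\frac1t\sum_i r_iW(x_i,a_i)/p_i$ for randomized policies $W$, $\pi_t=\arg\max_\pi\eta_t(\pi)$, $\Delta_t(W)=\eta_t(\pi_t)-\eta_t(W)$; $\mathbb{E}_{x\sim h_{t-1}}$ is the average over $x_1,\dots,x_{t-1}$. Actions are chosen by RandomizedUCB$(\Pi,\delta,K)$: $C_t=2\log(Nt/\delta)$, $\mu_t=\min\{\frac1{2K},\sqrt{C_t/(2Kt)}\}$; $P_t$ is a distribution over $\Pi$ whose objective $\sum_\pi P(\pi)\Delta_{t-1}(\pi)$ is within $\epsilon_{\mathrm{opt},t}=O(\sqrt{KC_t/t})$ of the optimum of minimizing it subject to: for all distributions $Q$ over $\Pi$, $\mathbb{E}_{\pi\sim Q}\mathbb{E}_{x\sim h_{t-1}}[1/((1-K\mu_t)W_P(x,\pi(x))+\mu_t)]\le\max\{4K,(t-1)\Delta_{t-1}(W_Q)^2/(180C_{t-1})\}$,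 with each constraint satisfied up to additive slack $K$; $W'_t(a)=(1-K\mu_t)W_{P_t}(x_t,a)+\mu_t$, $a_t\sim W'_t$, $p_t=W'_t(a_t)$. Constants: $\epsilon\in(0,1)$ fixed, $\rho=7500/\epsilon^3$, $\theta=(\rho+1)/(1-(1+\epsilon)/2)$. $t_0$ is the first $t$ with $\mu_t=\sqrt{C_t/(2Kt)}$; $t_1=\lceil16K\log(8KN/\delta)\rceil$. $V_t(\pi)=K$ for $t\le t_0$ and $V_t(\pi)=K+\mathbb{E}_{x\sim D_X}[1/((1-K\mu_t)W_{P_t}(x,\pi(x))+\mu_t)]$ for $t>t_0$; $\bar V_t(\pi)=\max_{\tau\le t}V_\tau(\pi)$. Condition 1: (i) for all $\pi\in\Pi$ and $t\ge t_1$, $\mathbb{E}_{x\sim D_X}[1/((1-K\mu_t)W_{P_t}(x,\pi(x))+\mu_t)]\le(1+\epsilon)\mathbb{E}_{x\sim h_{t-1}}[1/((1-K\mu_t)W_{P_t}(x,\pi(x))+\mu_t)]+\rho K$; and (ii) for all $\pi,\pi'\in\Pi$ and $t\ge t_0$, $|(\eta_t(\pi)-\eta_t(\pi'))-(\eta_D(\pi)-\eta_D(\pi'))|\le2\sqrt{(\bar V_t(\pi)+\bar V_t(\pi'))C_t/t}$. *)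

From HB Require Import structures.
From mathcomp Require Import all_boot all_order all_algebra.
From mathcomp Require Import all_classical all_reals all_analysis.
Set Implicit Arguments. Unset Strict Implicit. Unset Printing Implicit Defensive.
Import Order.TTheory GRing.Theory Num.Theory.
Local Open Scope ring_scope.

(* Setting: actions = finite type A (K = #|A|), policies = finite type Pi
   (N = #|Pi|), each policy p acts through [pol p : X -> A].
   Randomized policies are maps W : X -> A -> R. *)

Definition Kn (R : realType) (A : finType) : R := #|A|%:R.
Definition Nn (R : realType) (Pi : finType) : R := #|Pi|%:R.

Definition isDist (R : realType) (Pi : finType) (P : {ffun Pi -> R}) : Prop :=
  (forall p, 0 <= P p) /\ \sum_p P p = 1.

Definition WP (R : realType) (X : Type) (A Pi : finType) (pol : Pi -> X -> A)
  (P : {ffun Pi -> R}) (x : X) (a : A) : R :=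
  \sum_(p | pol p x == a) P p.

(* deterministic policy seen as a randomized one *)
Definition polW (R : realType) (X : Type) (A Pi : finType) (pol : Pi -> X -> A)
  (p : Pi) : X -> A -> R := fun x b => (pol p x == b)%:R.

Definition Ct (R : realType) (Pi : finType) (delta : R) (t : nat) : R :=
  2 * ln (Nn R Pi * t%:R / delta).

Definition sqt (R : realType) (A Pi : finType) (delta : R) (t : nat) : R :=
  Num.sqrt (Ct Pi delta t / (2 * Kn R A * t%:R)).

Definition mut (R : realType) (A Pi : finType) (delta : R) (t : nat) : R :=
  Num.min (2 * Kn R A)^-1 (sqt A Pi delta t).

Definition Wprime (R : realType) (X : Type) (A Pi : finType) (pol : Pi -> X -> A)
  (delta : R) (P : {ffun Pi -> R}) (t : nat) (x : X) (a : A) : R :=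
  (1 - Kn R A * mut A Pi delta t) * WP pol P x a + mut A Pi delta t.

(* History: contexts x_i, reward vectors rv_i, actions a_i, distributions P_i
   (i = 1, 2, ...; index 0 unused).  p_i = W'_i(a_i). *)
Definition prob (R : realType) (X : Type) (A Pi : finType) (pol : Pi -> X -> A)
  (delta : R) (x : nat -> X) (a : nat -> A) (P : nat -> {ffun Pi -> R}) (i : nat) : R :=
  Wprime pol delta (P i) i (x i) (a i).

Definition eta (R : realType) (X : Type) (A Pi : finType) (pol : Pi -> X -> A)
  (delta : R) (x : nat -> X) (rv : nat -> A -> R) (a : nat -> A)
  (P : nat -> {ffun Pi -> R}) (t : nat) (W : X -> A -> R) : R :=
  t%:R^-1 * \sum_(1 <= i < t.+1)
     rv i (a i) * W (x i) (a i) / prob pol delta x a P i.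

Definition Eh (R : realType) (X : Type) (x : nat -> X) (t : nat) (f : X -> R) : R :=
  t%:R^-1 * \sum_(1 <= i < t.+1) f (x i).

Definition Delta (R : realType) (X : Type) (A Pi : finType) (pol : Pi -> X -> A)
  (delta : R) (x : nat -> X) (rv : nat -> A -> R) (a : nat -> A)
  (P : nat -> {ffun Pi -> R}) (pit : nat -> Pi) (t : nat) (W : X -> A -> R) : R :=
  eta pol delta x rv a P t (polW R pol (pit t)) - eta pol delta x rv a P t W.

(* The constraint of RandomizedUCB at round t for candidate Pc, with additive slack *)
Definition feasible (R : realType) (X : Type) (A Pi : finType) (pol : Pi -> X -> A)
  (delta : R) (x : nat -> X) (rv : nat -> A -> R) (a : nat -> A)
  (P : nat -> {ffun Pi -> R}) (pit : nat -> Pi) (t : nat) (slack : R)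
  (Pc : {ffun Pi -> R}) : Prop :=
  forall Q : {ffun Pi -> R}, isDist Q ->
    \sum_p Q p * Eh x t.-1 (fun y => (Wprime pol delta Pc t y (pol p y))^-1)
    <= Num.max (4 * Kn R A)
         (t.-1%:R * (Delta pol delta x rv a P pit t.-1 (WP pol Q)) ^+ 2
            / (180 * Ct Pi delta t.-1))
       + slack.

Definition objective (R : realType) (X : Type) (A Pi : finType) (pol : Pi -> X -> A)
  (delta : R) (x : nat -> X) (rv : nat -> A -> R) (a : nat -> A)
  (P : nat -> {ffun Pi -> R}) (pit : nat -> Pi) (t : nat) (Pc : {ffun Pi -> R}) : R :=
  \sum_p Pc p * Delta pol delta x rv a P pit t.-1 (polW R pol p).

(* The P_t are chosen by RandomizedUCB(Pi, delta, K): for every round t >= 1,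
   P_t is a distribution satisfying the constraints up to slack K, and its
   objective is within eps_opt,t = c * sqrt(K C_t / t) of the optimum of the
   exactly constrained program (c is the constant hidden in the O(.)). *)
Definition RUCB (R : realType) (X : Type) (A Pi : finType) (pol : Pi -> X -> A)
  (delta : R) (x : nat -> X) (rv : nat -> A -> R) (a : nat -> A)
  (P : nat -> {ffun Pi -> R}) (pit : nat -> Pi) (c : R) : Prop :=
  forall t : nat, (1 <= t)%N ->
    [/\ isDist (P t),
        feasible pol delta x rv a P pit t (Kn R A) (P t) &
        forall P' : {ffun Pi -> R}, isDist P' ->
          feasible pol delta x rv a P pit t 0 P' ->
          objective pol delta x rv a P pit t (P t)
            <= objective pol delta x rv a P pit t P'
               + c * Num.sqrt (Kn R A * Ct Pi delta t / t%:R)].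

Definition is_argmax_hist (R : realType) (X : Type) (A Pi : finType) (pol : Pi -> X -> A)
  (delta : R) (x : nat -> X) (rv : nat -> A -> R) (a : nat -> A)
  (P : nat -> {ffun Pi -> R}) (pit : nat -> Pi) : Prop :=
  forall t p, eta pol delta x rv a P t (polW R pol p)
              <= eta pol delta x rv a P t (polW R pol (pit t)).

(* t0 = first t >= 1 with mu_t = sqrt(C_t/(2Kt)).
   le_t0 t  <-> t <= t0 ;  ge_t0 t <-> t >= t0 *)
Definition le_t0 (R : realType) (A Pi : finType) (delta : R) (t : nat) : Prop :=
  forall s, (0 < s < t)%N -> mut A Pi delta s <> sqt A Pi delta s.
Definition ge_t0 (R : realType) (A Pi : finType) (delta : R) (t : nat) : Prop :=
  exists2 s, (0 < s <= t)%N & mut A Pi delta s = sqt A Pi delta s.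

Definition ge_t1 (R : realType) (A Pi : finType) (delta : R) (t : nat) : Prop :=
  (Num.ceil (16 * Kn R A * ln (8 * Kn R A * Nn R Pi / delta)) <= t%:Z)%R.

(* The data distribution D over X x [0,1]^K is the law of (xD, rD) under the
   probability PD on a sample space Omega. *)
Definition ED (R : realType) (X : Type) (d : measure_display) (Omega : measurableType d)
  (PD : probability Omega R) (xD : Omega -> X) (f : X -> R) : R :=
  fine (\int[PD]_w (f (xD w))%:E).

Definition etaD (R : realType) (X : Type) (A Pi : finType) (pol : Pi -> X -> A)
  (d : measure_display) (Omega : measurableType d)
  (PD : probability Omega R) (xD : Omega -> X) (rD : Omega -> A -> R) (p : Pi) : R :=
  fine (\int[PD]_w (rD w (pol p (xD w)))%:E).

Definition Vt (R : realType) (X : Type) (A Pi : finType) (pol : Pi -> X -> A)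
  (d : measure_display) (Omega : measurableType d)
  (PD : probability Omega R) (xD : Omega -> X)
  (delta : R) (P : nat -> {ffun Pi -> R}) (t : nat) (p : Pi) : R :=
  if `[< le_t0 A Pi delta t >] then Kn R A
  else Kn R A + ED PD xD (fun y => (Wprime pol delta (P t) t y (pol p y))^-1).

Definition Vbar (R : realType) (X : Type) (A Pi : finType) (pol : Pi -> X -> A)
  (d : measure_display) (Omega : measurableType d)
  (PD : probability Omega R) (xD : Omega -> X)
  (delta : R) (P : nat -> {ffun Pi -> R}) (t : nat) (p : Pi) : R :=
  \big[Num.max/0]_(1 <= tau < t.+1) Vt pol PD xD delta P tau p.

Definition rho (R : realType) (eps : R) : R := 7500 / eps ^+ 3.
Definition theta (R : realType) (eps : R) : R := (rho eps + 1) / (1 - (1 + eps) / 2).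

Definition Condition1 (R : realType) (X : Type) (A Pi : finType) (pol : Pi -> X -> A)
  (d : measure_display) (Omega : measurableType d)
  (PD : probability Omega R) (xD : Omega -> X) (rD : Omega -> A -> R)
  (eps delta : R) (x : nat -> X) (rv : nat -> A -> R) (a : nat -> A)
  (P : nat -> {ffun Pi -> R}) : Prop :=
  (forall (p : Pi) (t : nat), ge_t1 A Pi delta t ->
     ED PD xD (fun y => (Wprime pol delta (P t) t y (pol p y))^-1)
     <= (1 + eps) * Eh x t.-1 (fun y => (Wprime pol delta (P t) t y (pol p y))^-1)
        + rho eps * Kn R A)
  /\
  (forall (p p' : Pi) (t : nat), ge_t0 A Pi delta t ->
     `| (eta pol delta x rv a P t (polW R pol p) - eta pol delta x rv a P t (polW R pol p'))
        - (etaD pol PD xD rD p - etaD pol PD xD rD p') |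
     <= 2 * Num.sqrt ((Vbar pol PD xD delta P t p + Vbar pol PD xD delta P t p')
                       * Ct Pi delta t / t%:R)).

From Pilot Require Import Defs.
From HB Require Import structures.
From mathcomp Require Import all_boot all_order all_algebra.
From mathcomp Require Import all_classical all_reals all_analysis.
From mathcomp Require Import ring lra.
Set Implicit Arguments. Unset Strict Implicit.
Import Order.TTheory GRing.Theory Num.Theory.
Local Open Scope ring_scope.
Local Open Scope classical_set_scope.

(* Up to round t0 the variance is K by definition, and before round t1 the exploration
   floor mu_t >= 1/(4K) bounds it by 5K. Afterwards, feasibility of P_t at the point mass on
   pi, transported from the empirical to the true context distribution by Condition 1(i),
   gives V_t(pi) <= (11 + rho) K + 2 (t-1) Delta_{t-1}(pi)^2 / (180 C_{t-1}). Condition 1(ii)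
   bounds Delta_{t-1}(pi* ) by the variances of pi* and pi_{t-1} at time t-1, and
   Delta_{s-1}(pi_t) by those of pi_{s-1}, pi* and pi_t at times s-1 and t, using that
   C_t/t decreases. As theta is large compared to rho, these recursive bounds close by strong
   induction on t. *)

Lemma ln_le_subr1 (R : realType) (x : R) : 0 < x -> ln x <= x - 1.
Proof. by move=> x0; have := @le_ln1Dx R (x - 1); rewrite addrCA subrr addr0; apply; lra. Qed.

Lemma ln_ge_expn2 (R : realType) (n : nat) (x : R) : 2 ^+ n <= x -> n%:R / 2 <= ln x.
Proof.
move=> hx; have ln2 : 2^-1 <= ln (2 : R).
  have := @ln_le_subr1 R 2^-1 ltac:(by []).
  by rewrite lnV ?posrE //; lra.
apply: (le_trans (y := ln (2 ^+ n))); last first.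
  by rewrite ler_ln ?posrE ?exprn_gt0 // (lt_le_trans _ hx) ?exprn_gt0.
have n0 : (0 : R) <= n%:R := ler0n _ n.
rewrite lnXn // -mulr_natr; nra.
Qed.

Lemma rho_ge (R : realType) (eps : R) : 0 < eps < 1 -> 7500 <= rho eps.
Proof.
case/andP=> e0 e1; rewrite /rho ler_pdivlMr ?exprn_gt0 //.
have : eps ^+ 3 <= 1 by rewrite exprn_ile1 // ltW.
lra.
Qed.

Lemma rho_le_theta (R : realType) (eps : R) :
  0 < eps < 1 -> 45 * (11 + rho eps) <= 29 * theta eps.
Proof.
move=> he; have := rho_ge he; case/andP: he => e0 e1 hr.
have : 2 * (rho eps + 1) <= theta eps by rewrite /theta ler_pdivlMr; nra.
lra.
Qed.

Lemma not_le_t0 (R : realType) (A Pi : finType) (delta : R) (s : nat) :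
  ~ le_t0 A Pi delta s -> (2 <= s)%N /\ ge_t0 A Pi delta s.-1.
Proof.
move=> hs; have [hg|hg] := pselect (ge_t0 A Pi delta s.-1).
  split => //; case: hg => u /andP[u0 us] _.
  by have := leq_trans u0 us; case: s {hs us} => [|[|s]].
exfalso; apply: hs => u /andP[u0 us] hu; apply: hg; exists u => //.
by rewrite u0 -ltnS prednK // (leq_trans u0 (ltnW us)).
Qed.

Lemma ge_t0_mono (R : realType) (A Pi : finType) (delta : R) (s t : nat) :
  (s <= t)%N -> ge_t0 A Pi delta s -> ge_t0 A Pi delta t.
Proof. by move=> st [u /andP[u0 us] hu]; exists u; rewrite ?u0 ?(leq_trans us st). Qed.

Section ExplorationRate.
Variables (R : realType) (A Pi : finType) (delta : R).
Hypotheses (delta_01 : 0 < delta < 1) (A_gt0 : (0 < #|A|)%N) (Pi_gt0 : (0 < #|Pi|)%N).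

Local Notation K := (Kn R A).
Local Notation N := (Nn R Pi).
Local Notation C := (Ct Pi delta).
Local Notation mu := (mut A Pi delta).

Lemma Kn_ge1 : 1 <= K. Proof. by rewrite /Kn ler1n. Qed.

Lemma Nn_ge1 : 1 <= N. Proof. by rewrite /Nn ler1n. Qed.

Lemma Ct_gt0 s : (1 <= s)%N -> 0 < C s.
Proof.
move=> s1; case/andP: delta_01 => d0 d1; have := Nn_ge1.
have : (1 : R) <= s%:R by rewrite ler1n.
move=> S1 N1; rewrite /Ct mulr_gt0 // ln_gt0 // ltr_pdivlMr //; nra.
Qed.

(* [C_t / t] is nonincreasing once [t >= 16], since then [ln (N t / delta) >= 1]. *)
Lemma Ct_div_le s t : (16 <= s)%N -> (s <= t)%N -> C t / t%:R <= C s / s%:R.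
Proof.
move=> hs hst; case/andP: delta_01 => d0 d1; have N1 := Nn_ge1.
have S16 : (16 : R) <= s%:R by rewrite (ler_nat R 16 s).
have TS : (s%:R : R) <= t%:R by rewrite ler_nat.
set b := N * s%:R / delta; set r := t%:R / (s%:R : R).
have hb : s%:R <= b by rewrite /b ler_pdivlMr //; nra.
have r0 : 0 < r by rewrite /r divr_gt0 //; lra.
have hbr : N * t%:R / delta = b * r.
  by rewrite /b /r; field; rewrite (gt_eqF d0) gt_eqF //; lra.
have Lb : 4%:R / 2 <= ln b.
  by apply: ln_ge_expn2; rewrite (_ : (2 : R) ^+ 4 = 16) ?(natrX R 2 4) //; lra.
have Lr : ln r <= r - 1 by exact: ln_le_subr1.
have rs : r * s%:R = t%:R by rewrite /r; field; rewrite gt_eqF //; lra.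
rewrite /Ct hbr lnM ?posrE ?(lt_le_trans _ hb) //; last lra.
rewrite ler_pdivrMr; last lra.
rewrite mulrAC ler_pdivlMr; last lra.
nra.
Qed.

Lemma mut_gt0 s : (1 <= s)%N -> 0 < mu s.
Proof.
move=> s1; have K1 := Kn_ge1; have S1 : (1 : R) <= s%:R by rewrite ler1n.
rewrite /mut lt_min invr_gt0 /sqt sqrtr_gt0 divr_gt0 ?Ct_gt0 //; nra.
Qed.

Lemma Kmut_le s : K * mu s <= 2^-1.
Proof.
have K1 := Kn_ge1; have -> : (2^-1 : R) = K * (2 * K)^-1 by field; lra.
by rewrite ler_pM2l ?ge_min ?lexx //; lra.
Qed.

Lemma ge_t1_ge17 s : ge_t1 A Pi delta s -> (17 <= s)%N.
Proof.
rewrite /ge_t1 ceil_le_int pmulrn => hs; case/andP: delta_01 => d0 d1.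
have K1 := Kn_ge1; have N1 := Nn_ge1.
have : 3%:R / 2 <= ln (8 * K * N / delta).
  by apply: ln_ge_expn2; rewrite ler_pdivlMr //; nra.
by move=> hl; rewrite -(ler_nat R); nra.
Qed.

Lemma lt_t1_le_Ct t : (2 <= t)%N -> ~ ge_t1 A Pi delta t -> t%:R <= 8 * K * C t.
Proof.
move=> t2; rewrite /ge_t1 ceil_le_int => /negP; rewrite -ltNge pmulrn => hlt.
case/andP: delta_01 => d0 d1; have K1 := Kn_ge1; have N1 := Nn_ge1.
have T2 : (2 : R) <= t%:R by rewrite (ler_nat R 2 t).
have hx : 2 <= N * t%:R / delta by rewrite ler_pdivlMr //; nra.
have L2 : 1%:R / 2 <= ln (N * t%:R / delta) by exact: ln_ge_expn2.
rewrite /Ct; have [h8|h8] := lerP (8 * K) t%:R; last nra.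
suff : ln (8 * K * N / delta) <= ln (N * t%:R / delta) by nra.
by rewrite ler_ln ?posrE ?ler_pM2r ?invr_gt0 ?divr_gt0 //; nra.
Qed.

Lemma mut_ge_lt_t1 t : (2 <= t)%N -> ~ ge_t1 A Pi delta t -> (4 * K)^-1 <= mu t.
Proof.
move=> t2 ht; have K1 := Kn_ge1; have hC := lt_t1_le_Ct t2 ht.
have T2 : (2 : R) <= t%:R by rewrite (ler_nat R 2 t).
rewrite /mut le_min lef_pV2 ?posrE; [|nra..]; rewrite ler_pM2r /=; last lra.
have -> : (4 * K)^-1 = Num.sqrt ((4 * K)^-1 ^+ 2).
  by rewrite sqrtr_sqr ger0_norm // invr_ge0; lra.
rewrite /sqt ler_sqrt; last by apply: divr_ge0; [exact/ltW/Ct_gt0/ltnW | nra].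
rewrite ler_pdivlMr; last nra.
have -> : (4 * K)^-1 ^+ 2 * (2 * K * t%:R) = t%:R / (8 * K).
  by field; rewrite gt_eqF //; lra.
by rewrite ler_pdivrMr; [lra|nra].
Qed.

End ExplorationRate.

Lemma Wprime_ge_mut (R : realType) (X : Type) (A Pi : finType) (pol : Pi -> X -> A)
    (delta : R) (Q : {ffun Pi -> R}) (s : nat) (y : X) (b : A) :
  (0 < #|A|)%N -> isDist Q -> mut A Pi delta s <= Wprime pol delta Q s y b.
Proof.
move=> hA [Q0 _]; have := @Kmut_le R A Pi delta hA s.
have : 0 <= WP pol Q y b by apply: sumr_ge0.
rewrite /Wprime; nra.
Qed.

Definition point_mass (R : realType) (Pi : finType) (p : Pi) : {ffun Pi -> R} :=
  [ffun q => (q == p)%:R].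

Lemma sum_point_mass (R : realType) (Pi : finType) (p : Pi) (F : Pi -> R) :
  \sum_q point_mass R p q * F q = F p.
Proof.
rewrite (bigD1 p) //= ffunE eqxx mul1r big1 ?addr0 // => q hq.
by rewrite ffunE (negbTE hq) mul0r.
Qed.

Lemma point_mass_dist (R : realType) (Pi : finType) (p : Pi) : isDist (point_mass R p).
Proof.
split=> [q|]; first by rewrite ffunE ler0n.
by have := sum_point_mass p (fun=> (1 : R)); under eq_bigr do rewrite mulr1.
Qed.

Lemma WP_point_mass (R : realType) (X : Type) (A Pi : finType) (pol : Pi -> X -> A)
    (p : Pi) :
  WP pol (point_mass R p) = polW R pol p.
Proof.
apply/funext => y; apply/funext => b; rewrite /WP /polW big_mkcond /=.
rewrite (bigD1 p) //= ffunE eqxx big1 ?addr0; first by case: ifP.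
by move=> q hq; rewrite ffunE (negbTE hq); case: ifP.
Qed.

(* [w |-> (pol q (xD w))_q] takes finitely many values, each on a finite intersection of
   the given events. *)
Lemma measurable_fun_of_actions (X : Type) (A Pi : finType) (pol : Pi -> X -> A)
    (d : measure_display) (Omega : measurableType d) (xD : Omega -> X)
    (d' : measure_display) (T : measurableType d') (h : {ffun Pi -> A} -> T) :
  (forall (p : Pi) (b : A), measurable (xD @^-1` [set y | pol p y = b])) ->
  measurable_fun setT (fun w => h [ffun q => pol q (xD w)]).
Proof.
move=> mxD _ B mB.
have -> : [set: Omega] `&` (fun w => h [ffun q => pol q (xD w)]) @^-1` B =
    \bigcup_(f in [set f | B (h f)]) \bigcap_(q in [set: Pi])
      (xD @^-1` [set y | pol q y = f q]).
  apply/seteqP; split => w /=.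
    by move=> [_ Bw]; exists [ffun q => pol q (xD w)] => //= q _; rewrite ffunE.
  move=> [f Bf Hf]; split => //.
  suff -> : [ffun q => pol q (xD w)] = f by [].
  by apply/ffunP => q; rewrite ffunE; exact: (Hf q I).
apply: fin_bigcup_measurable; first exact: finite_finset.
move=> f _; apply: fin_bigcap_measurable; first exact: finite_finset.
by move=> q _; exact: mxD.
Qed.

Lemma ED_le (R : realType) (X : Type) (d : measure_display) (Omega : measurableType d)
    (PD : probability Omega R) (xD : Omega -> X) (f : X -> R) (M : R) :
  (forall y, 0 <= f y <= M) -> measurable_fun setT (fun w => f (xD w)) ->
  ED PD xD f <= M.
Proof.
move=> fM mf; have f0 y : (0 <= (f y)%:E)%E by rewrite lee_fin; case/andP: (fM y).
have : (\int[PD]_w (f (xD w))%:E <= \int[PD]_w (cst M%:E) w)%E.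
  apply: ge0_le_integral => // [|w _]; first exact/measurable_realfun.measurable_EFinP.
  by rewrite lee_fin; case/andP: (fM (xD w)).
rewrite integral_cst // (_ : (_ * _)%E = M%:E) /ED; last first.
  by rewrite -[RHS]mule1; congr (_ * _)%E; exact: probability_setT.
have : (0 <= \int[PD]_w (f (xD w))%:E)%E by exact: integral_ge0.
by case: (\int[PD]_w _)%E.
Qed.

Lemma probability_inhabited (R : realType) (d : measure_display) (Omega : measurableType d)
    (PD : probability Omega R) : inhabited Omega.
Proof.
apply/exists_inhabited; apply: contrapT => /forallNP Omega0.
have T0 : [set: Omega] = set0.
  by apply/seteqP; split => // w _; apply: (Omega0 w).
have := probability_setT PD; rewrite T0 measure0 => /(congr1 fine) /= /eqP.
by rewrite eq_sym oner_eq0.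
Qed.

Lemma ler_sqrt_mul_div (R : realType) (a b C s C' s' : R) :
  0 <= b -> a <= b -> 0 <= C / s -> C / s <= C' / s' ->
  Num.sqrt (a * C / s) <= Num.sqrt (b * C' / s').
Proof. by move=> b0 ab u0 uw; apply: ler_wsqrtr; rewrite -!mulrA; nra. Qed.

Lemma sqr_le_of_le_sqrt (R : realType) (s C B k D : R) :
  0 < s -> 0 < C -> 0 <= B -> 0 <= k -> 0 <= D -> D <= k * Num.sqrt (B * C / s) ->
  s * D ^+ 2 / C <= k ^+ 2 * B.
Proof.
move=> s0 C0 B0 k0 D0 hD; have BCs : 0 <= B * C / s.
  by apply: divr_ge0; [apply: mulr_ge0 => //; exact: ltW | exact: ltW].
have : D ^+ 2 <= k ^+ 2 * (B * C / s).
  by rewrite -(sqr_sqrtr BCs); have := sqrtr_ge0 (B * C / s); nra.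
rewrite ler_pdivrMr // -(ler_pM2l s0) => /le_trans; apply.
suff -> : k ^+ 2 * B * C = s * (k ^+ 2 * (B * C / s)) by [].
by field; rewrite gt_eqF.
Qed.

Section VarianceBound.
Variables (R : realType) (X : Type) (A Pi : finType) (pol : Pi -> X -> A)
  (d : measure_display) (Omega : measurableType d) (PD : probability Omega R)
  (xD : Omega -> X) (rD : Omega -> A -> R)
  (eps delta c : R) (x : nat -> X) (rv : nat -> A -> R) (a : nat -> A)
  (P : nat -> {ffun Pi -> R}) (pit : nat -> Pi) (pistar : Pi).
Hypotheses (xD_meas : forall (p : Pi) (b : A), measurable (xD @^-1` [set y | pol p y = b]))
  (delta_01 : 0 < delta < 1) (eps_01 : 0 < eps < 1)
  (rucb : RUCB pol delta x rv a P pit c)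
  (pit_argmax : is_argmax_hist pol delta x rv a P pit)
  (pistar_opt : forall p : Pi, etaD pol PD xD rD p <= etaD pol PD xD rD pistar)
  (cond1 : Condition1 pol PD xD rD eps delta x rv a P)
  (A_gt0 : (0 < #|A|)%N).

Local Notation K := (Kn R A).
Local Notation C := (Ct Pi delta).
Local Notation V := (Vt pol PD xD delta P).
Local Notation Vb := (Vbar pol PD xD delta P).
Local Notation eta_ s p := (Defs.eta pol delta x rv a P s (polW R pol p)).
Local Notation Dlt s p := (Delta pol delta x rv a P pit s (polW R pol p)).
Local Notation W s p y := (Wprime pol delta (P s) s y (pol p y)).

(* The data-dependent branch of the maximum in the constraint of round [s], at the point
   mass on [p]. *)
Definition gap_term s p := s.-1%:R * Dlt s.-1 p ^+ 2 / (180 * C s.-1).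

Let Pi_gt0 : (0 < #|Pi|)%N. Proof. by apply/card_gt0P; exists pistar. Qed.

Let K_ge1 : 1 <= K. Proof. exact: Kn_ge1. Qed.

Let theta_ge0 : 0 <= theta eps.
Proof. by have := rho_le_theta eps_01; have := rho_ge eps_01; lra. Qed.

Lemma inv_Wprime_le s p y : (1 <= s)%N ->
  0 <= (W s p y)^-1 <= (mut A Pi delta s)^-1.
Proof.
move=> s1; have [Ps _ _] := rucb s1; have mu0 := mut_gt0 delta_01 A_gt0 Pi_gt0 s1.
have muW := @Wprime_ge_mut R X A Pi pol delta (P s) s y (pol p y) A_gt0 Ps.
by rewrite invr_ge0 ltW ?lef_pV2 ?posrE //=; apply: lt_le_trans muW.
Qed.

Lemma Eh_inv_Wprime_le s p : (1 <= s)%N ->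
  Eh x s.-1 (fun y => (W s p y)^-1) <= Num.max (4 * K) (gap_term s p) + K.
Proof.
move=> s1; have [_ feas _] := rucb s1.
by have := feas _ (point_mass_dist R p); rewrite sum_point_mass WP_point_mass.
Qed.

Lemma ED_inv_Wprime_lt_t1 s p : (2 <= s)%N -> ~ ge_t1 A Pi delta s ->
  ED PD xD (fun y => (W s p y)^-1) <= 4 * K.
Proof.
move=> s2 hs; apply: ED_le => [y|].
  have /andP[-> le_mu] := inv_Wprime_le p y (ltnW s2); apply: le_trans le_mu _.
  rewrite -[leRHS]invrK lef_pV2 ?posrE ?invr_gt0 ?mut_gt0 ?(ltnW s2) //; last first.
    by rewrite mulr_gt0 // (lt_le_trans ltr01).
  exact: (mut_ge_lt_t1 delta_01 A_gt0 Pi_gt0 s2 hs).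
have := measurable_fun_of_actions (fun phi : {ffun Pi -> A} =>
  ((1 - K * mut A Pi delta s) * (\sum_(q | phi q == phi p) P s q)
     + mut A Pi delta s)^-1) xD_meas.
congr measurable_fun; apply/funext => w; rewrite /Wprime /WP.
by congr (_ ^-1); congr (_ * _ + _); apply: eq_bigl => q; rewrite !ffunE.
Qed.

Lemma Vt_le_gap s p B : (1 <= s)%N -> 0 <= B ->
    (~ le_t0 A Pi delta s -> ge_t1 A Pi delta s -> gap_term s p <= B) ->
  V s p <= (11 + rho eps) * K + 2 * B.
Proof.
move=> s1 B0 gapB; have r0 := rho_ge eps_01; rewrite /Vt.
have K1 := K_ge1; case: asboolP => [_|hs]; first nra.
have [s2 _] := not_le_t0 hs.
have [ht1|ht1] := pselect (ge_t1 A Pi delta s); last first.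
  by have := ED_inv_Wprime_lt_t1 p s2 ht1; nra.
have hE := Eh_inv_Wprime_le p s1; have hD := proj1 cond1 p s ht1.
have hmax : Num.max (4 * K) (gap_term s p) <= 4 * K + B.
  by have := gapB hs ht1; rewrite ge_max => gB; apply/andP; split; lra.
case/andP: eps_01 => e0 e1; nra.
Qed.

Lemma Vbar_ge0 t p : 0 <= Vb t p.
Proof. exact: bigmax_ge_id. Qed.

Lemma Vbar_mono s t p : (s <= t)%N -> Vb s p <= Vb t p.
Proof. by move=> st; apply: (@le_bigmax_nat _ _ _ _ _ _ _ xpredT). Qed.

Lemma Vbar_le t p B : 0 <= B ->
  (forall s, (1 <= s <= t)%N -> V s p <= B) -> Vb t p <= B.
Proof.
move=> B0 VB; rewrite /Vbar big_seq; apply: bigmax_le => // s.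
by rewrite mem_index_iota ltnS; exact: VB.
Qed.

Lemma Delta_ge0 s p : 0 <= Dlt s p.
Proof. by rewrite /Delta subr_ge0. Qed.

Lemma eta_diff_le s p q : ge_t0 A Pi delta s ->
  eta_ s q - eta_ s p <= etaD pol PD xD rD q - etaD pol PD xD rD p
    + 2 * Num.sqrt ((Vb s q + Vb s p) * C s / s%:R).
Proof. by move/(proj2 cond1 q p); rewrite ler_norml => /andP[]; lra. Qed.

Lemma etaD_diff_le s p q : ge_t0 A Pi delta s ->
  etaD pol PD xD rD q - etaD pol PD xD rD p <= eta_ s q - eta_ s p
    + 2 * Num.sqrt ((Vb s q + Vb s p) * C s / s%:R).
Proof. by move/(proj2 cond1 q p); rewrite ler_norml => /andP[]; lra. Qed.

Lemma Delta_pistar_le s : ge_t0 A Pi delta s ->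
  Dlt s pistar <= 2 * Num.sqrt ((Vb s (pit s) + Vb s pistar) * C s / s%:R).
Proof.
move=> hs; have := eta_diff_le pistar (pit s) hs.
by have := pistar_opt (pit s); rewrite /Delta; lra.
Qed.

(* Compare [pi_t] with [pi_s] through the true values [etaD], which [pistar] maximizes,
   and back through [eta_t], which [pi_t] maximizes. *)
Lemma Delta_pit_le s t : ge_t0 A Pi delta s -> (s <= t)%N ->
  Dlt s (pit t) <= 2 * Num.sqrt ((Vb s (pit s) + Vb s (pit t)) * C s / s%:R)
                   + 2 * Num.sqrt ((Vb t pistar + Vb t (pit t)) * C t / t%:R).
Proof.
move=> hs st; have := eta_diff_le (pit t) (pit s) hs.
have := etaD_diff_le (pit t) pistar (ge_t0_mono st hs).
have := pit_argmax t pistar; have := pistar_opt (pit s).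
by rewrite /Delta; lra.
Qed.

Lemma gap_term_le s p k B : (2 <= s)%N -> 0 <= k -> 0 <= B ->
  Dlt s.-1 p <= k * Num.sqrt (B * C s.-1 / s.-1%:R) -> gap_term s p <= k ^+ 2 * B / 180.
Proof.
move=> s2 k0 B0 hD; have s1 : (1 <= s.-1)%N by rewrite -ltnS prednK // ltnW.
have C0 := Ct_gt0 delta_01 Pi_gt0 s1.
have s0 : (0 : R) < s.-1%:R by rewrite ltr0n.
have := sqr_le_of_le_sqrt s0 C0 B0 k0 (Delta_ge0 _ _) hD.
by move=> h; rewrite /gap_term [180 * _]mulrC invfM mulrA ler_pM2r ?invr_gt0.
Qed.

Lemma V_pistar_step t : Vb t pistar <= theta eps * K -> Vb t (pit t) <= theta eps * K ->
  V t.+1 pistar <= theta eps * K.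
Proof.
move=> Vstar Vpit; have K1 := K_ge1; have th0 := theta_ge0.
have := rho_le_theta eps_01 => rth; have r0 := rho_ge eps_01.
have gap : ~ le_t0 A Pi delta t.+1 -> ge_t1 A Pi delta t.+1 ->
    gap_term t.+1 pistar <= 2 ^+ 2 * (theta eps * K + theta eps * K) / 180.
  move=> /not_le_t0 [t2 ht0] _; apply: gap_term_le => //; first nra.
  apply: (le_trans (Delta_pistar_le ht0)); rewrite ler_pM2l //.
  apply: ler_sqrt_mul_div; [nra|lra| |done].
  by rewrite divr_ge0 // ltW // Ct_gt0.
have := Vt_le_gap (ltn0Sn t) _ gap; nra.
Qed.

Lemma Vbar_pit_step t : (forall s, (s < t)%N -> Vb s (pit s) <= theta eps * K) ->
  Vb t pistar <= theta eps * K -> Vb t (pit t) <= theta eps * K.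
Proof.
move=> IH Vstar; have K1 := K_ge1; have th0 := theta_ge0.
have := rho_le_theta eps_01 => rth; have r0 := rho_ge eps_01; set v := Vb t (pit t).
have v0 : 0 <= v by exact: Vbar_ge0.
suff : v <= (11 + rho eps) * K + 2 * (4 ^+ 2 * (theta eps * K + v) / 180) by nra.
apply: Vbar_le => [|s /andP[s1 st]]; first by nra.
apply: Vt_le_gap => // [|hs ht1]; first by nra.
have [s2 hs0] := not_le_t0 hs.
have s16 : (16 <= s.-1)%N by rewrite -ltnS prednK // (ge_t1_ge17 delta_01 A_gt0 Pi_gt0).
have s'1 : (1 <= s.-1)%N := leq_trans (isT : (1 <= 16)%N) s16.
have s't : (s.-1 < t)%N by rewrite prednK.
have Cs0 : 0 <= C s.-1 / s.-1%:R by rewrite divr_ge0 // ltW // Ct_gt0.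
apply: gap_term_le => //; first nra.
apply: (le_trans (Delta_pit_le hs0 (ltnW s't))).
have le1 : Num.sqrt ((Vb s.-1 (pit s.-1) + Vb s.-1 (pit t)) * C s.-1 / s.-1%:R)
    <= Num.sqrt ((theta eps * K + v) * C s.-1 / s.-1%:R).
  apply: ler_sqrt_mul_div => //; first nra.
  by have := IH _ s't; have := Vbar_mono (pit t) (ltnW s't); rewrite -/v; lra.
have le2 : Num.sqrt ((Vb t pistar + v) * C t / t%:R)
    <= Num.sqrt ((theta eps * K + v) * C s.-1 / s.-1%:R).
  apply: ler_sqrt_mul_div => //; first nra; first lra.
  - by rewrite divr_ge0 // ltW // Ct_gt0 // (leq_trans s'1 (ltnW s't)).
  - exact: Ct_div_le delta_01 Pi_gt0 _ _ s16 (ltnW s't).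
lra.
Qed.

Lemma Vbar_le_theta t : Vb t pistar <= theta eps * K /\ Vb t (pit t) <= theta eps * K.
Proof.
elim/ltn_ind: t => t IH.
have Vstar : Vb t pistar <= theta eps * K.
  apply: Vbar_le => [|s /andP[s1 st]]; first by have := K_ge1; have := theta_ge0; nra.
  have s't : (s.-1 < t)%N by rewrite prednK.
  by rewrite -(prednK s1); apply: V_pistar_step; [exact: (IH _ s't).1 | exact: (IH _ s't).2].
by split=> //; apply: Vbar_pit_step => // s st; exact: (IH s st).2.
Qed.

End VarianceBound.

Theorem lemma13 (R : realType) (X : Type) (A Pi : finType) (pol : Pi -> X -> A)
  (d : measure_display) (Omega : measurableType d) (PD : probability Omega R)
  (xD : Omega -> X) (rD : Omega -> A -> R)
  (eps delta c : R) (x : nat -> X) (rv : nat -> A -> R) (a : nat -> A)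
  (P : nat -> {ffun Pi -> R}) (pit : nat -> Pi) (pistar : Pi) :
  (forall (p : Pi) (b : A), measurable (xD @^-1` [set y | pol p y = b])) ->
  (forall b : A, measurable_fun setT (fun w => rD w b)) ->
  (forall w b, 0 <= rD w b <= 1) ->
  (forall i b, 0 <= rv i b <= 1) ->
  0 < delta < 1 ->
  0 < eps < 1 ->
  RUCB pol delta x rv a P pit c ->
  is_argmax_hist pol delta x rv a P pit ->
  (forall p : Pi, etaD pol PD xD rD p <= etaD pol PD xD rD pistar) ->
  Condition1 pol PD xD rD eps delta x rv a P ->
  forall t : nat, (1 <= t)%N ->
    Vbar pol PD xD delta P t pistar <= theta eps * Kn R A /\
    Vbar pol PD xD delta P t (pit t) <= theta eps * Kn R A.
Proof.
move=> xD_meas _ _ _ delta_01 eps_01 rucb pit_argmax pistar_opt cond1 t _.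
have [w0] := probability_inhabited PD.
have A_gt0 : (0 < #|A|)%N by apply/card_gt0P; exists (pol pistar (xD w0)).
exact: Vbar_le_theta xD_meas delta_01 eps_01 rucb pit_argmax pistar_opt cond1 A_gt0 t.
Qed.
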